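(* Let $R=k\{x_1,\ldots,x_n;\,Q,\preceq\}$ be a PBW algebra, $M\subseteq R^s$ an $R$-subbimodule, and give $R^{\rm env}$ its PBW structure with one of the orders $\preceq^*$, $\preceq^c$, $\preceq_*$, $\preceq_c$ on $\mathbb{N}^{2n}$. If $G$ is a left Gröbner basis of the left $R^{\rm env}$-module $N_M=(\mathfrak m^s)^{-1}(M)\subseteq(R^{\rm env})^s$ with respect to TOP (resp. POT), then $\mathfrak m^s(G)\setminus\{0\}$ is a two-sided Gröbner basis of $M$ with respect to TOP (resp. POT) built from $\preceq$.
   Context: $k$ is a field; $x^\alpha=x_1^{\alpha_1}\cdots x_n^{\alpha_n}$. A PBW algebra $R=k\{x_1,\ldots,x_n;Q,\preceq\}$ is a quotient of $k\langle x_1,\ldots,x_n\rangle$ by the two-sided ideal generated by $Q=\{x_jx_i-q_{ji}x_ix_j-p_{ji};\,i<j\}$, $q_{ji}\in k^*$, each $p_{ji}$ a combination of standard monomials with exponents $\prec\epsilon_i+\epsilon_j$ for an admissible order $\preceq$ (total, compatible with addition, $0$ minimal), such that the standard monomials form a $k$-basis. $R^{\rm env}=R\otimes_kR^{\rm op}$ is the PBW algebra in the variables $x_1\otimes1,\ldots,x_n\otimes1,1\otimes x_n,\ldots,1\otimes x_1$ (in this order) with relations $(x_j\otimes1)(x_i\otimes1)-q_{ji}(x_i\otimes1)(x_j\otimes1)-p_{ji}\otimes1$, $(1\otimes x_j)(x_i\otimes1)-(x_i\otimes1)(1\otimes x_j)$, $(1\otimes x_i)(1\otimes x_j)-q_{ji}(1\otimes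 x_j)(1\otimes x_i)-1\otimes p_{ji}$; exponent $(\alpha,\beta)\in\mathbb N^{2n}$ corresponds to $x^\alpha\otimes x^{\beta^{\rm op}}$, $\beta^{\rm op}=(\beta_n,\ldots,\beta_1)$. With $\alpha\preceq^{\rm op}\beta$ iff $\alpha^{\rm op}\preceq\beta^{\rm op}$: $(\alpha,\beta)\prec^*(\gamma,\delta)$ iff $\beta\prec^{\rm op}\delta$ or ($\beta=\delta$, $\alpha\prec\gamma$); $(\alpha,\beta)\prec_*(\gamma,\delta)$ iff $\alpha\prec\gamma$ or ($\alpha=\gamma$, $\beta\prec^{\rm op}\delta$); $(\alpha,\beta)\prec^c(\gamma,\delta)$ iff $\alpha+\beta^{\rm op}\prec\gamma+\delta^{\rm op}$ or (equality and $\beta^{\rm op}\prec\delta^{\rm op}$); $(\alpha,\beta)\prec_c(\gamma,\delta)$ iff $\alpha+\beta^{\rm op}\prec\gamma+\delta^{\rm op}$ or (equality and $\alpha\prec\gamma$). For an admissible order $\le$ on $\mathbb N^m$, on $\mathbb N^{m,(s)}=\mathbb N^m\times\{1,\ldots,s\}$ TOP is: $(\alpha,i)<(\beta,j)$ iff $\alpha<\beta$, or $\alpha=\beta$ and $i>j$; POT is: $(\alpha,i)<(\beta,j)$ iff $i>j$, or $i=j$ and $\alpha<\beta$. For $A=R$ or $R^{\rm env}$ with standard basis $\mathbf e_i$ of $A^s$, a nonzero $\mathbf f=\sum c_{(\alpha,i)}x^\alpha\mathbf e_i$ has $\exp(\mathbf f)$ the largest $(\alpha,i)$ with nonzero coefficient;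 for $L\subseteq A^s$, $\mathrm{Exp}(L)=\{\exp(\mathbf f):0\ne\mathbf f\in L\}$; $(\alpha,i)+\mathbb N^m:=\{(\alpha+\gamma,i):\gamma\in\mathbb N^m\}$. A finite $G\subseteq L\setminus\{0\}$ is a left Gröbner basis of a left submodule $L\subseteq A^s$ if $L={}_A\langle G\rangle$ and $\mathrm{Exp}(L)=\bigcup_{\mathbf g\in G}(\exp(\mathbf g)+\mathbb N^m)$. A finite $G\subseteq M\setminus\{0\}$ is a two-sided Gröbner basis of an $R$-subbimodule $M\subseteq R^s$ if $M={}_R\langle G\rangle_R$ (sub-bimodule generated) and $\mathrm{Exp}(M)=\bigcup_{\mathbf g\in G}(\exp(\mathbf g)+\mathbb N^n)$. $R^s$ is a left $R^{\rm env}$-module via $(r\otimes r')\mathbf f=(rf_1r',\ldots,rf_sr')$; $\mathfrak m^s:(R^{\rm env})^s\to R^s$ applies $\mathfrak m(r\otimes r')=rr'$ coordinatewise. *)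

From HB Require Import structures.
From mathcomp Require Import all_boot all_order all_algebra.
Set Implicit Arguments.
Unset Strict Implicit.
Unset Printing Implicit Defensive.
Import GRing.Theory.
Local Open Scope ring_scope.

Definition mono (n : nat) := {ffun 'I_n -> nat}.
Definition madd n (a b : mono n) : mono n := [ffun i => (a i + b i)%N].
Definition mzero n : mono n := [ffun => 0%N].
Definition meps n (i : 'I_n) : mono n := [ffun j => nat_of_bool (j == i)].
Definition mrev n (a : mono n) : mono n := [ffun i => a (rev_ord i)].

Definition admissible n (le : rel (mono n)) : Prop :=
  (forall a, le a a) /\
  (forall a b, le a b -> le b a -> a = b) /\
  (forall a b c, le a b -> le b c -> le a c) /\
  (forall a b, le a b || le b a) /\
  (forall a b c, le a b -> le (madd a c) (madd b c)) /\
  (forall a, le (mzero n) a).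

Definition strict (T : eqType) (le : rel T) : rel T :=
  fun a b => le a b && (a != b).

Definition smono (k : fieldType) (R : algType k) n (x : 'I_n -> R) (a : mono n) : R :=
  \prod_(i < n) x i ^+ a i.

Definition is_basis (k : fieldType) (V : lmodType k) (I : eqType) (b : I -> V) : Prop :=
  (forall v : V, exists (l : seq I) (c : I -> k), v = \sum_(j <- l) c j *: b j) /\
  (forall (l : seq I) (c : I -> k), uniq l -> \sum_(j <- l) c j *: b j = 0 ->
     forall j, j \in l -> c j = 0).

Definition is_PBW (k : fieldType) (R : algType k) n (x : 'I_n -> R)
    (q : 'I_n -> 'I_n -> k) (p : 'I_n -> 'I_n -> R) (le : rel (mono n)) : Prop :=
  [/\ admissible le,
      (forall i j : 'I_n, (i < j)%N -> q j i != 0),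
      (forall i j : 'I_n, (i < j)%N -> x j * x i = q j i *: (x i * x j) + p j i),
      (forall i j : 'I_n, (i < j)%N -> exists (l : seq (mono n)) (c : mono n -> k),
          all (fun a => strict le a (madd (meps i) (meps j))) l /\
          p j i = \sum_(a <- l) c a *: smono x a) &
      is_basis (smono x)].

Section Exps.
Variables (k : fieldType) (A : algType k) (I : eqType) (b : I -> A) (s : nat).

Definition supp (v : A) (i : I) : Prop :=
  exists (l : seq I) (c : I -> k),
    [/\ uniq l, v = \sum_(j <- l) c j *: b j, i \in l & c i != 0].

(* the coefficient of (alpha, i), i.e. of x^alpha e_i, in f is nonzero *)
Definition vsupp (f : 'I_s -> A) (e : I * 'I_s) : Prop := supp (f e.2) e.1.

Definition vnonzero (f : 'I_s -> A) : Prop := exists i, f i != 0.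

Definition is_exp (ltm : rel (I * 'I_s)) (f : 'I_s -> A) (e : I * 'I_s) : Prop :=
  vsupp f e /\ forall e', vsupp f e' -> e' = e \/ ltm e' e.

Definition ExpSet (ltm : rel (I * 'I_s)) (L : ('I_s -> A) -> Prop) (e : I * 'I_s) : Prop :=
  exists f, [/\ L f, vnonzero f & is_exp ltm f e].

Definition vzero : 'I_s -> A := fun _ => 0.

Definition ConeUnion (addI : I -> I -> I) (ltm : rel (I * 'I_s))
    (G : seq ('I_s -> A)) (e : I * 'I_s) : Prop :=
  exists j, (j < size G)%N /\ exists e0 d,
    is_exp ltm (nth vzero G j) e0 /\ e = (addI e0.1 d, e0.2).

Definition lspan (G : seq ('I_s -> A)) (F : 'I_s -> A) : Prop :=
  exists c : nat -> A, forall i, F i = \sum_(j < size G) c j * nth vzero G j i.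

Definition tspan (G : seq ('I_s -> A)) (F : 'I_s -> A) : Prop :=
  exists l : seq (A * nat * A), all (fun t => (t.1.2 < size G)%N) l /\
    forall i, F i = \sum_(t <- l) t.1.1 * nth vzero G t.1.2 i * t.2.

Definition in_minus0 (L : ('I_s -> A) -> Prop) (G : seq ('I_s -> A)) : Prop :=
  forall j, (j < size G)%N -> L (nth vzero G j) /\ vnonzero (nth vzero G j).

Definition left_GB addI ltm (L : ('I_s -> A) -> Prop) (G : seq ('I_s -> A)) : Prop :=
  [/\ in_minus0 L G,
      (forall F, L F <-> lspan G F) &
      (forall e, ExpSet ltm L e <-> ConeUnion addI ltm G e)].

Definition twosided_GB addI ltm (M : ('I_s -> A) -> Prop) (G : seq ('I_s -> A)) : Prop :=
  [/\ in_minus0 M G,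
      (forall F, M F <-> tspan G F) &
      (forall e, ExpSet ltm M e <-> ConeUnion addI ltm G e)].
End Exps.

Definition subbimodule (k : fieldType) (R : algType k) s (M : ('I_s -> R) -> Prop) : Prop :=
  [/\ M (fun _ => 0),
      (forall f g, M f -> M g -> M (fun i => f i + g i)) &
      (forall a b f, M f -> M (fun i => a * f i * b))].

Inductive modord_kind := TOP | POT.

Definition modlt (I : eqType) s (t : modord_kind) (lt : rel I) : rel (I * 'I_s) :=
  fun e1 e2 => match t with
  | TOP => lt e1.1 e2.1 || (e1.1 == e2.1) && (e2.2 < e1.2)%N
  | POT => (e2.2 < e1.2)%N || (e1.2 == e2.2) && lt e1.1 e2.1
  end.

Inductive env_kind := EStar | ELowStar | EUpC | ELowC .

Definition madd2 n (a b : mono n * mono n) : mono n * mono n :=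
  (madd a.1 b.1, madd a.2 b.2).

Definition env_lt n (le : rel (mono n)) (o : env_kind) : rel (mono n * mono n) :=
  fun ab gd =>
  let lt := strict le in
  let ltop := fun u v => lt (mrev u) (mrev v) in
  let (a, b) := ab in let (g, d) := gd in
  match o with
  | EStar => ltop b d || (b == d) && lt a g
  | ELowStar => lt a g || (a == g) && ltop b d
  | EUpC => lt (madd a (mrev b)) (madd g (mrev d)) ||
            (madd a (mrev b) == madd g (mrev d)) && lt (mrev b) (mrev d)
  | ELowC => lt (madd a (mrev b)) (madd g (mrev d)) ||
            (madd a (mrev b) == madd g (mrev d)) && lt a g
  end.

(* E together with lam, rho is (isomorphic to) R (x)_k R^op: lam is a k-algebra
   map, rho a k-algebra anti-map, their images commute, and the products
   lam(x^alpha) rho(x^{beta^op}) (the standard monomials x^alpha (x) x^{beta^op}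
   of the PBW structure of R^env) form a k-basis of E. *)
Definition env_basis (k : fieldType) (R E : algType k) n (x : 'I_n -> R)
  (lam rho : R -> E) (ab : mono n * mono n) : E :=
  lam (smono x ab.1) * rho (smono x (mrev ab.2)).

Definition is_env (k : fieldType) (R E : algType k) n (x : 'I_n -> R)
    (lam rho : R -> E) : Prop :=
  [/\ ((forall a b, lam (a + b) = lam a + lam b) /\ (forall (c : k) a, lam (c *: a) = c *: lam a)),
      ((forall a b, lam (a * b) = lam a * lam b) /\ lam 1 = 1),
      ((forall a b, rho (a + b) = rho a + rho b) /\ (forall (c : k) a, rho (c *: a) = c *: rho a)),
      ((forall a b, rho (a * b) = rho b * rho a) /\ rho 1 = 1) &
      ((forall a b, lam a * rho b = rho b * lam a) /\ is_basis (env_basis x lam rho))].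

Definition is_mult_map (k : fieldType) (R E : algType k) (lam rho : R -> E) (m : E -> R) : Prop :=
  [/\ (forall u v, m (u + v) = m u + m v),
      (forall (c : k) u, m (c *: u) = c *: m u) &
      (forall a b, m (lam a * rho b) = a * b)].

From mathcomp Require Import all_boot all_order all_algebra zify.
From Stdlib Require Import ClassicalEpsilon FunctionalExtensionality Classical.
Import GRing.Theory.
Set Implicit Arguments.
Unset Strict Implicit.
Unset Printing Implicit Defensive.

(* The multiplication [m] is split by [lam] and is a bimodule map:
   [m (lam a * rho b * u) = a * m u * b]. Hence [M = m (N_M)], and [m G]
   generates [M] as a bimodule.
   For the exponents: in a PBW algebra [x^a x^b] has leading exponent [a + b],
   so [m] sends [x^a (x) x^(b^op)] to an element of leading exponent
   [a + b^op]. Each of the four orders has an axis, [N^n x 0] or [0 x N^n],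
   such that [m] sends every monomial below a point [(a, b)] of the axis to
   exponents strictly below [a + b^op]. Lifting [f] in [M] to that axis puts
   [exp f] in a cone
   [exp g + N^(2n)] whose vertex also lies on the axis, hence
   [exp f \in exp (m g) + N^n]; conversely [x^d * m g] lies in [M] and has
   exponent [exp (m g) + d]. *)

Lemma maddC n (a b : mono n) : madd a b = madd b a.
Proof. by apply/ffunP => i; rewrite !ffunE addnC. Qed.

Lemma madd0 n (a : mono n) : madd a (mzero n) = a.
Proof. by apply/ffunP => i; rewrite !ffunE addn0. Qed.

Lemma add0m n (a : mono n) : madd (mzero n) a = a.
Proof. by rewrite maddC madd0. Qed.

Lemma maddI n (c a b : mono n) : madd a c = madd b c -> a = b.
Proof. by move/ffunP=> h; apply/ffunP => i; move: (h i); rewrite !ffunE => /addIn. Qed.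

Lemma madd_eq0 n (a b : mono n) : madd a b = mzero n -> a = mzero n.
Proof.
move/ffunP=> h; apply/ffunP => i.
by move: (h i); rewrite !ffunE => /eqP; rewrite addn_eq0 => /andP[/eqP -> _].
Qed.

Lemma mrevK n (a : mono n) : mrev (mrev a) = a.
Proof. by apply/ffunP => i; rewrite !ffunE rev_ordK. Qed.

Lemma mrev0 n : mrev (mzero n) = mzero n.
Proof. by apply/ffunP => i; rewrite !ffunE. Qed.

Lemma exists_min_beyond (g : nat -> nat) i :
  exists j, (i < j)%N /\ forall j', (i < j')%N -> (g j <= g j')%N.
Proof.
suff H N j0 : (i < j0)%N -> (g j0 < N)%N ->
    exists j, (i < j)%N /\ forall j', (i < j')%N -> (g j <= g j')%N.
  exact: (H (g i.+1).+1 i.+1).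
elim: N j0 => [//|N IH] j0 ij0 gN.
case: (classic (exists j', (i < j')%N /\ (g j' < g j0)%N)) => [[j' [ij' gj']]|hmin].
  by apply: (IH j') => //; apply: leq_trans gj' gN.
exists j0; split=> // j' ij'; rewrite leqNgt; apply/negP => h.
by apply: hmin; exists j'.
Qed.

Lemma nondecreasing_subseq (g : nat -> nat) : exists phi : nat -> nat,
  forall k, (phi k < phi k.+1)%N /\ (g (phi k) <= g (phi k.+1))%N.
Proof.
pose next i := proj1_sig (constructive_indefinite_description _ (exists_min_beyond g i)).
have nextP i : (i < next i)%N /\ forall j, (i < j)%N -> (g (next i) <= g j)%N.
  by rewrite /next; case: constructive_indefinite_description.
exists (fun k => iter k.+1 next 0%N) => k; split; first exact: (nextP _).1.
rewrite [iter k.+1 _ _]/= [iter k.+2 _ _]/=.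
have [lt_next min_next] := nextP (iter k next 0%N).
by apply: min_next; apply: ltn_trans lt_next (nextP _).1.
Qed.

Lemma dickson n (cs : seq 'I_n) (f : nat -> mono n) :
  exists phi : nat -> nat, (forall k, (phi k < phi k.+1)%N) /\
    forall c, c \in cs -> forall k, (f (phi k) c <= f (phi k.+1) c)%N.
Proof.
elim: cs => [|c cs [phi [phi_inc phi_mono]]]; first by exists id.
have [psi psiP] := nondecreasing_subseq (fun k => f (phi k) c).
exists (fun k => phi (psi k)); split.
  by move=> k; apply: (homo_ltn ltn_trans phi_inc); case: (psiP k).
move=> c'; rewrite inE => /orP[/eqP->|c'_cs] j; first by case: (psiP j).
apply: (@homo_leq nat (fun i => f (phi i) c') leq leqnn leq_trans (phi_mono c' c'_cs)).
by apply: ltnW; case: (psiP j).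
Qed.

Section Admissible.
Variables (n : nat) (le : rel (mono n)).
Hypothesis le_adm : admissible le.
Local Notation lt := (strict le).

Lemma le_refl a : le a a. Proof. by case: le_adm. Qed.
Lemma le_anti a b : le a b -> le b a -> a = b. Proof. by case: le_adm => _ [h _]; apply: h. Qed.
Lemma le_trans a b c : le a b -> le b c -> le a c.
Proof. by case: le_adm => _ [_ [h _]]; apply: h. Qed.
Lemma leD2r c a b : le a b -> le (madd a c) (madd b c).
Proof. by case: le_adm => _ [_ [_ [_ [h _]]]]; apply: h. Qed.
Lemma le0m a : le (mzero n) a. Proof. by case: le_adm => _ [_ [_ [_ [_ h]]]]. Qed.

Lemma ltW a b : lt a b -> le a b. Proof. by case/andP. Qed.
Lemma ltxx a : lt a a = false. Proof. by rewrite /strict eqxx andbF. Qed.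

Lemma le_eqVlt a b : le a b -> a = b \/ lt a b.
Proof. by case: (a =P b) => [|/eqP ne] hab; [left | right; apply/andP]. Qed.

Lemma le_lt_trans a b c : le a b -> lt b c -> lt a c.
Proof.
move=> hab /andP[hbc nbc]; rewrite /strict (le_trans hab hbc) /=.
by apply: contra nbc => /eqP eac; subst; apply/eqP/le_anti.
Qed.

Lemma lt_le_trans a b c : lt a b -> le b c -> lt a c.
Proof.
move=> /andP[hab nab] hbc; rewrite /strict (le_trans hab hbc) /=.
by apply: contra nab => /eqP eac; subst; apply/eqP/le_anti.
Qed.

Lemma lt_trans a b c : lt a b -> lt b c -> lt a c.
Proof. by move=> hab /ltW; apply: lt_le_trans. Qed.

Lemma lt_geF a b : lt a b -> le b a = false.
Proof. by move=> hab; apply/negP => hba; move: (lt_le_trans hab hba); rewrite ltxx. Qed.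

Lemma ltD2r c a b : lt a b -> lt (madd a c) (madd b c).
Proof.
case/andP=> hab nab; rewrite /strict leD2r //=.
by apply: contra nab => /eqP/maddI ->.
Qed.

Lemma ltD2l c a b : lt a b -> lt (madd c a) (madd c b).
Proof. by rewrite ![madd c _]maddC; apply: ltD2r. Qed.

Lemma le_addm a c : le a (madd a c).
Proof. by rewrite -{1}(madd0 a) ![madd a _]maddC; apply/leD2r/le0m. Qed.

Lemma ltm0 a : lt a (mzero n) = false.
Proof. by apply/negP => /lt_geF; rewrite le0m. Qed.

(* By Dickson's lemma an infinite descending chain would contain [f i] and
   [f j], [i < j], with [f j = f i + c] componentwise, whence [f i <= f j]. *)
Lemma lt_wf : well_founded (fun a b => lt a b).
Proof.
move=> a0; apply: NNPP => a0_nacc.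
pose nacc a := ~ Acc (fun a b => lt a b) a.
have descend a : nacc a -> exists a', lt a' a /\ nacc a'.
  move=> a_nacc; apply: NNPP => hn; apply: a_nacc; constructor => a' la.
  by apply: NNPP => hn'; apply: hn; exists a'.
pose next (a : {a | nacc a}) : {a | nacc a} :=
  let h := constructive_indefinite_description _ (descend _ (proj2_sig a)) in
  exist _ (proj1_sig h) (proj2 (proj2_sig h)).
pose f k := proj1_sig (iter k next (exist _ a0 a0_nacc)).
have f_desc k : lt (f k.+1) (f k).
  by rewrite /f /= /next /=; case: constructive_indefinite_description => a' [].
have [phi [phi_inc phi_mono]] := dickson (enum 'I_n) f.
have f01 : lt (f (phi 1%N)) (f (phi 0%N)).
  apply: (@homo_ltn _ f (fun a b => lt b a) _ f_desc _ _ (phi_inc 0%N)).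
  by move=> y z w h1 h2; apply: lt_trans h2 h1.
suff : le (f (phi 0%N)) (f (phi 1%N)) by rewrite (lt_geF f01).
have -> : f (phi 1%N) = madd (f (phi 0%N)) [ffun c => (f (phi 1%N) c - f (phi 0%N) c)%N].
  by apply/ffunP => c; rewrite !ffunE subnKC // phi_mono ?mem_enum.
exact: le_addm.
Qed.

End Admissible.

Local Open Scope ring_scope.

Section Coordinates.
Variables (k : fieldType) (V : lmodType k) (I : eqType) (b : I -> V).
Hypothesis hb : is_basis b.

Definition lcomb (l : seq I) (c : I -> k) : V := \sum_(j <- l) c j *: b j.

Definition lcomb_coef (l : seq I) (c : I -> k) (e : I) : k := \sum_(j <- l | j == e) c j.

Lemma lcomb_coef_uniq l c e : uniq l -> lcomb_coef l c e = if e \in l then c e else 0.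
Proof.
move=> ul; rewrite /lcomb_coef; case: ifP => el.
  by rewrite -big_filter (@filter_pred1_uniq _ l e) // big_seq1.
by rewrite big1_seq // => j /andP[/eqP -> ]; rewrite el.
Qed.

Lemma lcomb_coef_notin l c e : e \notin l -> lcomb_coef l c e = 0.
Proof. by move=> el; rewrite /lcomb_coef big1_seq // => j /andP[/eqP -> jl]; rewrite jl in el. Qed.

Lemma lcomb_over l c u : uniq u -> {subset l <= u} ->
  lcomb l c = \sum_(e <- u) lcomb_coef l c e *: b e.
Proof.
move=> uu sub; rewrite /lcomb /lcomb_coef.
transitivity (\sum_(e <- u) \sum_(j <- l) (if j == e then c j *: b j else 0)).
  rewrite exchange_big /=; apply: eq_big_seq => j jl.
  rewrite (bigD1_seq j) ?sub //= eqxx big1 ?addr0 // => e /negPf.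
  by rewrite eq_sym => ->.
apply: eq_bigr => e _; rewrite scaler_suml -big_mkcond /=.
by apply: eq_bigr => j /eqP ->.
Qed.

Lemma lcomb_coef_unique l1 c1 l2 c2 e :
  lcomb l1 c1 = lcomb l2 c2 -> lcomb_coef l1 c1 e = lcomb_coef l2 c2 e.
Proof.
move=> eq12; set u := undup (l1 ++ l2).
have uu : uniq u by exact: undup_uniq.
have s1 : {subset l1 <= u} by move=> y yl; rewrite mem_undup mem_cat yl.
have s2 : {subset l2 <= u} by move=> y yl; rewrite mem_undup mem_cat yl orbT.
have H : \sum_(j <- u) (lcomb_coef l1 c1 j - lcomb_coef l2 c2 j) *: b j = 0.
  under eq_bigr do rewrite scalerBl.
  by rewrite sumrB -lcomb_over // -lcomb_over // eq12 subrr.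
case eu: (e \in u).
  by apply/eqP; rewrite -subr_eq0; apply/eqP; exact: (hb.2 _ _ uu H e eu).
by rewrite !lcomb_coef_notin //; apply: contraFN eu; [move/s2 | move/s1].
Qed.

Lemma exists_lcomb v : exists lc : seq I * (I -> k), v = lcomb lc.1 lc.2.
Proof. by have [l [c ->]] := hb.1 v; exists (l, c). Qed.

Definition rep v := proj1_sig (constructive_indefinite_description _ (exists_lcomb v)).

Lemma repE v : v = lcomb (rep v).1 (rep v).2.
Proof. by rewrite /rep; case: constructive_indefinite_description. Qed.

Definition coef v e : k := lcomb_coef (rep v).1 (rep v).2 e.
Definition coef_supp v : seq I := undup (rep v).1.

Lemma coef_lcomb l c e : coef (lcomb l c) e = lcomb_coef l c e.
Proof. by apply: lcomb_coef_unique; rewrite -repE. Qed.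

Lemma coef_lcomb_uniq u c e : uniq u -> coef (lcomb u c) e = if e \in u then c e else 0.
Proof. by move=> uu; rewrite coef_lcomb lcomb_coef_uniq. Qed.

Lemma coef_notin_supp v e : e \notin coef_supp v -> coef v e = 0.
Proof. by rewrite mem_undup; exact: lcomb_coef_notin. Qed.

Lemma mem_coef_supp v e : coef v e != 0 -> e \in coef_supp v.
Proof. by apply: contraR => /coef_notin_supp ->. Qed.

Lemma coef_expand_over v u : uniq u -> {subset coef_supp v <= u} ->
  v = \sum_(e <- u) coef v e *: b e.
Proof.
move=> uu sub; rewrite {1}(repE v) (@lcomb_over _ _ u) //.
by move=> y yl; apply: sub; rewrite mem_undup.
Qed.

Lemma coef_expand v : v = \sum_(e <- coef_supp v) coef v e *: b e.
Proof. exact: coef_expand_over (undup_uniq _) _. Qed.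

Lemma coefD v w e : coef (v + w) e = coef v e + coef w e.
Proof.
set u := undup (coef_supp v ++ coef_supp w).
have uu : uniq u by exact: undup_uniq.
have s1 : {subset coef_supp v <= u} by move=> y yl; rewrite mem_undup mem_cat yl.
have s2 : {subset coef_supp w <= u} by move=> y yl; rewrite mem_undup mem_cat yl orbT.
have -> : v + w = lcomb u (fun e => coef v e + coef w e).
  rewrite {1}(coef_expand_over uu s1) {1}(coef_expand_over uu s2) -big_split /=.
  by apply: eq_bigr => j _; rewrite scalerDl.
rewrite coef_lcomb_uniq //; case: ifPn => // eu.
by rewrite !coef_notin_supp ?addr0 //; apply: contra eu; [move/s2 | move/s1].
Qed.

Lemma coefZ a v e : coef (a *: v) e = a * coef v e.
Proof.
have -> : a *: v = lcomb (coef_supp v) (fun e => a * coef v e).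
  by rewrite {1}(coef_expand v) scaler_sumr; apply: eq_bigr => j _; rewrite scalerA.
rewrite coef_lcomb_uniq ?undup_uniq //; case: ifPn => // eu.
by rewrite coef_notin_supp // mulr0.
Qed.

Lemma coef0 e : coef 0 e = 0.
Proof. by rewrite -(scale0r (0 : V)) coefZ mul0r. Qed.

Lemma coef_basis j e : coef (b j) e = (e == j)%:R.
Proof.
have -> : b j = lcomb [:: j] (fun _ => 1) by rewrite /lcomb big_seq1 scale1r.
by rewrite coef_lcomb_uniq // inE; case: (e == j).
Qed.

Lemma coef_sum (J : Type) (r : seq J) (F : J -> V) e :
  coef (\sum_(i <- r) F i) e = \sum_(i <- r) coef (F i) e.
Proof. exact: (big_morph (coef^~ e) (fun v w => coefD v w e) (coef0 e)). Qed.

End Coordinates.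

Lemma suppE (k : fieldType) (A : algType k) (I : eqType) (b : I -> A) (hb : is_basis b) v e :
  supp b v e <-> coef hb v e != 0.
Proof.
split=> [[l [c [ul -> el ce]]]|ce].
  by rewrite -/(lcomb b l c) coef_lcomb_uniq // el.
exists (coef_supp hb v), (coef hb v); split; rewrite ?undup_uniq //.
  exact: coef_expand.
exact: mem_coef_supp.
Qed.

Lemma is_exp_nonzero (k : fieldType) (A : algType k) (I : eqType) (b : I -> A) (hb : is_basis b)
  s ltm (f : 'I_s -> A) e : is_exp b ltm f e -> f e.2 != 0.
Proof. by move=> [/(suppE hb) h _]; apply: contraNneq h => ->; rewrite coef0. Qed.

Section Words.
Variables (k : fieldType) (R : algType k) (n : nat) (x : 'I_n -> R).

Definition wexp (w : seq 'I_n) : mono n := [ffun i => count_mem i w].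
Definition wprod (w : seq 'I_n) : R := \prod_(i <- w) x i.
Definition std_word (d : mono n) : seq 'I_n :=
  flatten [seq nseq (d i) i | i <- index_enum 'I_n].

Local Notation ord_le := (fun i j : 'I_n => (i <= j)%N).

Lemma wexp_cat u v : wexp (u ++ v) = madd (wexp u) (wexp v).
Proof. by apply/ffunP => i; rewrite !ffunE count_cat. Qed.

Lemma wexp_swap u v (i j : 'I_n) : wexp (u ++ i :: j :: v) = wexp (u ++ j :: i :: v).
Proof.
apply/ffunP => y; rewrite !ffunE !count_cat /=.
by case: (i == y); case: (j == y) => /=; lia.
Qed.

Lemma wexp_pair u v (i j : 'I_n) :
  wexp (u ++ j :: i :: v) = madd (wexp u) (madd (madd (meps i) (meps j)) (wexp v)).
Proof.
apply/ffunP => y; rewrite !ffunE count_cat /= !(eq_sym y).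
by case: (i == y); case: (j == y) => /=; lia.
Qed.

Lemma wprod_cat u v : wprod (u ++ v) = wprod u * wprod v.
Proof. by rewrite /wprod big_cat. Qed.

Lemma wprod_std_word d : wprod (std_word d) = smono x d.
Proof.
rewrite /wprod /std_word /smono big_flatten /= big_map.
apply: eq_bigr => i _; rewrite big_nseq.
by elim: (d i) => [|e IH] //=; rewrite IH exprS.
Qed.

Lemma wexp_std_word d : wexp (std_word d) = d.
Proof.
apply/ffunP => i; rewrite ffunE /std_word count_flatten -map_comp.
rewrite (eq_map (g := fun j => (j == i) * d j)%N) => [|j /=]; last by rewrite count_nseq.
rewrite sumnE big_map (bigD1_seq i) ?mem_index_enum ?index_enum_uniq //= eqxx mul1n.
by rewrite big1 ?addn0 // => j /negPf ->.
Qed.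

Lemma sorted_std_word d : sorted ord_le (std_word d).
Proof.
have ord_le_trans : transitive ord_le by move=> ? ? ?; apply: leq_trans.
rewrite sorted_pairwise // /std_word.
have : pairwise ord_le (index_enum 'I_n).
  rewrite -sorted_pairwise // [index_enum _]unlock -enumT.
  by have := iota_sorted 0 n; rewrite -val_enum_ord sorted_map.
elim: (index_enum 'I_n) => //= a r IH /andP[ha hr].
rewrite pairwise_cat IH // andbT; apply/andP; split; last first.
  by elim: (d a) => //= e ->; rewrite andbT all_nseq leqnn orbT.
apply/allrelP => y z; rewrite mem_nseq => /andP[_ /eqP->].
case/flattenP => _ /mapP[j jr ->]; rewrite mem_nseq => /andP[_ /eqP->].
by move/allP: ha; apply.
Qed.

Lemma sorted_std_wordE w : sorted ord_le w -> w = std_word (wexp w).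
Proof.
have ord_le_anti : antisymmetric ord_le.
  by move=> a b /andP[h1 h2]; apply/val_inj/eqP; rewrite eqn_leq h1.
move=> hs; apply: (sorted_eq (fun _ _ _ => @leq_trans _ _ _) ord_le_anti) => //.
  exact: sorted_std_word.
apply/allP => y _ /=; apply/eqP.
by have := congr1 (fun f : mono n => f y) (wexp_std_word (wexp w)); rewrite !ffunE => ->.
Qed.

Lemma unsorted_descent w : ~~ sorted ord_le w ->
  exists u v (i j : 'I_n), w = u ++ j :: i :: v /\ (i < j)%N.
Proof.
elim: w => [//|a w IH]; case: w IH => [//|b w] IH /=.
case: (leqP a b) => /= [_ /IH [u [v [i [j [-> ij]]]]]|ba _].
  by exists (a :: u), v, i, j.
by exists [::], w, b, a.
Qed.

Fixpoint word_weight (w : seq 'I_n) : nat :=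
  if w is a :: w' then ((size w').+1 * a + word_weight w')%N else 0%N.

Lemma word_weight_swap u v (i j : 'I_n) : (i < j)%N ->
  (word_weight (u ++ i :: j :: v) < word_weight (u ++ j :: i :: v))%N.
Proof.
move=> ij; elim: u => [|a u IH] /=; first by set z := size v; nia.
by rewrite !size_cat /=; lia.
Qed.

End Words.

Section PBW.
Variables (k : fieldType) (R : algType k) (n : nat) (x : 'I_n -> R)
    (q : 'I_n -> 'I_n -> k) (p : 'I_n -> 'I_n -> R) (le : rel (mono n)).
Hypothesis hP : is_PBW x q p le.
Local Notation lt := (strict le).

Lemma pbw_adm : admissible le. Proof. by case: hP. Qed.
Lemma pbw_basis : is_basis (smono x). Proof. by case: hP. Qed.
Local Notation coefR := (coef pbw_basis).

Definition lead_exp (r : R) (d : mono n) :=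
  coefR r d != 0 /\ forall g, coefR r g != 0 -> le g d.

Lemma wprod_swap u v (i j : 'I_n) : (i < j)%N ->
  exists (l : seq (mono n)) (c : mono n -> k),
  (forall a, a \in l -> lt (wexp (u ++ std_word a ++ v)) (wexp (u ++ j :: i :: v))) /\
  wprod x (u ++ j :: i :: v) =
    q j i *: wprod x (u ++ i :: j :: v) + \sum_(a <- l) c a *: wprod x (u ++ std_word a ++ v).
Proof.
case: hP => adm _ hrel hp _ ij; have [l [c [l_lt p_ji]]] := hp i j ij.
exists l, c; split=> [a al|].
  rewrite wexp_pair !wexp_cat wexp_std_word; apply/(ltD2l adm)/(ltD2r adm).
  by move/allP: l_lt; apply.
rewrite !wprod_cat {1 2}/wprod !big_cons !mulrA -(mulrA _ (x j)) hrel // p_ji.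
rewrite mulrDr mulrDl -scalerAr -scalerAl mulr_sumr mulr_suml; congr (_ *: _ + _).
  by rewrite /wprod !big_cons !mulrA.
by apply: eq_bigr => a _; rewrite -scalerAr -scalerAl -wprod_std_word !wprod_cat !mulrA.
Qed.

(* Sorting [w] with the relations [x_j x_i = q_ji x_i x_j + p_ji] multiplies
   the coefficient of [x^(wexp w)] by nonzero [q_ji]'s and only adds terms of
   smaller exponent: hence the induction on the exponent and, for a fixed
   exponent, on [word_weight]. *)
Lemma lead_exp_wprod w : lead_exp (wprod x w) (wexp w).
Proof.
have adm := pbw_adm; suff wprod_lead d : wexp w = d -> lead_exp (wprod x w) d by exact: wprod_lead.
elim/(well_founded_induction (lt_wf adm)): d w => d IHd w.
move: (ltnSn (word_weight w)); move: {2}(word_weight w).+1 => N.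
elim: N w => [//|N IHN] w w_N w_d.
case: (boolP (sorted (fun i j : 'I_n => (i <= j)%N) w)) => [w_sorted|/unsorted_descent].
  rewrite /lead_exp (sorted_std_wordE w_sorted) wprod_std_word w_d coef_basis eqxx.
  split=> [|g]; first exact: oner_neq0.
  by rewrite coef_basis; case: (g =P d) => [->|]; rewrite ?le_refl ?eqxx.
move=> [u [v [i [j [ew ij]]]]]; subst w.
have [l [c [l_lt wprod_w]]] := wprod_swap u v ij; rewrite w_d in l_lt.
have [lead_w' supp_w'] : lead_exp (wprod x (u ++ i :: j :: v)) d.
  apply: IHN; last by rewrite wexp_swap.
  exact: leq_trans (word_weight_swap u v ij) w_N.
have lower a g : a \in l -> coefR (wprod x (u ++ std_word a ++ v)) g != 0 -> lt g d.
  move=> al /((IHd _ (l_lt a al) _ erefl).2) g_le.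
  exact: (le_lt_trans adm g_le (l_lt a al)).
have lower0 g : ~~ lt g d -> \sum_(a <- l) c a * coefR (wprod x (u ++ std_word a ++ v)) g = 0.
  move=> g_d; rewrite big1_seq // => a /andP[_ al].
  by apply/eqP; rewrite mulf_eq0 orbC; apply/orP; left; apply: contraNT g_d; apply: lower.
have coefE g : coefR (wprod x (u ++ j :: i :: v)) g = q j i * coefR (wprod x (u ++ i :: j :: v)) g +
    \sum_(a <- l) c a * coefR (wprod x (u ++ std_word a ++ v)) g.
  rewrite wprod_w coefD coefZ coef_sum; congr (_ + _).
  by apply: eq_bigr => a _; rewrite coefZ.
split; first by rewrite coefE lower0 ?ltxx // addr0 mulf_neq0 //; case: hP => _ ->.
move=> g; rewrite coefE; case: (boolP (lt g d)) => [/ltW //|g_d].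
by rewrite lower0 // addr0 mulf_eq0 negb_or => /andP[_ /supp_w'].
Qed.

Lemma lead_exp_smonoM a b : lead_exp (smono x a * smono x b) (madd a b).
Proof.
by have := lead_exp_wprod (std_word a ++ std_word b);
  rewrite wprod_cat !wprod_std_word wexp_cat !wexp_std_word.
Qed.

End PBW.

Lemma modlt_eqpos (I : eqType) s t (lt : rel I) a e (i : 'I_s) :
  modlt t lt (a, i) (e, i) = lt a e.
Proof. by case: t; rewrite /= ltnn ?eqxx ?andbF ?orbF. Qed.

Section ExpImage.
Variables (k : fieldType) (V1 V2 : algType k) (I1 I2 : eqType) (b1 : I1 -> V1) (b2 : I2 -> V2).
Hypotheses (hb1 : is_basis b1) (hb2 : is_basis b2).
Variables (s : nat) (t : modord_kind) (lt1 : rel I1) (lt2 : rel I2).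
Variables (psi : I1 -> I2) (w : I1 -> V2) (Q : I2 -> I1 -> Prop) (e : I1).
Hypotheses (lt2_irr : irreflexive lt2)
  (w_supp : forall a g, coef hb2 (w a) g != 0 -> Q g a)
  (Q_below : forall a g, Q g a -> lt1 a e -> lt2 g (psi e))
  (Q_top : forall g, Q g e -> g = psi e \/ lt2 g (psi e))
  (w_lead : coef hb2 (w e) (psi e) != 0).

Lemma is_exp_image (u : 'I_s -> V1) (v : 'I_s -> V2) i0 :
  (forall i, v i = \sum_(a <- coef_supp hb1 (u i)) coef hb1 (u i) a *: w a) ->
  is_exp b1 (modlt t lt1) u (e, i0) -> is_exp b2 (modlt t lt2) v (psi e, i0).
Proof.
move=> v_def [/(suppE hb1) /= u_e u_max].
have coef_v i g : coef hb2 (v i) g =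
    \sum_(a <- coef_supp hb1 (u i)) coef hb1 (u i) a * coef hb2 (w a) g.
  by rewrite v_def coef_sum; apply: eq_bigr => a _; rewrite coefZ.
have u_below a i : coef hb1 (u i) a != 0 -> (a, i) = (e, i0) \/ modlt t lt1 (a, i) (e, i0).
  by move=> /(suppE hb1); exact: (u_max (a, i)).
split.
  apply/(suppE hb2); rewrite /= coef_v (bigD1_seq e) ?undup_uniq ?mem_coef_supp //=.
  rewrite big1 ?addr0 ?mulf_neq0 // => a a_e.
  case: (boolP (coef hb1 (u i0) a == 0)) => [/eqP->|u_a]; first by rewrite mul0r.
  case: (boolP (coef hb2 (w a) (psi e) == 0)) => [/eqP->|w_a]; first by rewrite mulr0.
  case: (u_below a i0 u_a) => [[a_eq]|]; first by rewrite a_eq eqxx in a_e.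
  by rewrite modlt_eqpos => /(Q_below (w_supp w_a)); rewrite lt2_irr.
move=> [g i] /(suppE hb2); rewrite /= coef_v => v_g.
have [a _ /andP[u_a w_a]] :
    exists2 a, a \in coef_supp hb1 (u i) & (coef hb1 (u i) a != 0) && (coef hb2 (w a) g != 0).
  apply/hasP; apply: contraNT v_g => /hasPn no_a; rewrite big1_seq // => a /andP[_ /no_a].
  by rewrite negb_and => /orP[]/negPn/eqP->; rewrite ?mul0r ?mulr0.
have Q_ga := w_supp w_a.
case: (u_below a i u_a) => [[a_e i_e]|].
  subst a i; case: (Q_top Q_ga) => [->|g_lt]; [by left | right].
  by case: t => /=; rewrite g_lt ?ltnn ?eqxx.
case: t => /= /orP[a_lt|/andP[/eqP a_eq i_lt]]; right.
- by rewrite (Q_below Q_ga a_lt).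
- by subst a; case: (Q_top Q_ga) => [->|g_lt]; rewrite ?g_lt ?eqxx ?i_lt ?orbT.
- by rewrite a_lt.
- by subst i; rewrite (Q_below Q_ga i_lt) eqxx orbT.
Qed.

End ExpImage.

Section TwoSidedSpan.
Variables (k : fieldType) (A : algType k) (s : nat) (Gs : seq ('I_s -> A)).

Lemma tspan_ext f g : tspan Gs f -> f =1 g -> tspan Gs g.
Proof. by move=> [l [hl hf]] fg; exists l; split=> // i; rewrite -fg. Qed.

Lemma tspan0 : tspan Gs (fun _ => 0).
Proof. by exists [::]; split=> // i; rewrite big_nil. Qed.

Lemma tspanD f g : tspan Gs f -> tspan Gs g -> tspan Gs (fun i => f i + g i).
Proof.
move=> [l1 [h1 f1]] [l2 [h2 f2]]; exists (l1 ++ l2).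
by rewrite all_cat h1 h2; split=> // i; rewrite big_cat /= f1 f2.
Qed.

Lemma tspanM f a b : tspan Gs f -> tspan Gs (fun i => a * f i * b).
Proof.
move=> [l [hl hf]]; exists [seq (a * t.1.1, t.1.2, t.2 * b) | t <- l].
rewrite all_map; split=> [|i]; first by apply: sub_all hl => t.
by rewrite hf big_map mulr_sumr mulr_suml; apply: eq_bigr => t _; rewrite /= !mulrA.
Qed.

Lemma tspan_sum (J : Type) (r : seq J) (F : J -> 'I_s -> A) :
  (forall j, tspan Gs (F j)) -> tspan Gs (fun i => \sum_(j <- r) F j i).
Proof.
move=> F_span; elim: r => [|a r IH]; first by apply: tspan_ext tspan0 _ => i; rewrite big_nil.
by apply: tspan_ext (tspanD (F_span a) IH) _ => i; rewrite big_cons.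
Qed.

Lemma tspan_nth j : (j < size Gs)%N -> tspan Gs (nth (@vzero k A s) Gs j).
Proof.
move=> j_lt; exists [:: (1, j, 1)]; split; rewrite /= ?j_lt // => i.
by rewrite big_seq1 /= mul1r mulr1.
Qed.

Lemma subbimodule_tspan (M : ('I_s -> A) -> Prop) F : subbimodule M ->
  (forall j, (j < size Gs)%N -> M (nth (@vzero k A s) Gs j)) -> tspan Gs F -> M F.
Proof.
move=> [M0 MD MS] MG [l [l_lt /functional_extensionality ->]] {F}.
have M_eq f g : M f -> f =1 g -> M g by move=> Mf /functional_extensionality <-.
elim: l l_lt => [_|[[a j] b] l IH /= /andP[j_lt l_lt]].
  by apply: M_eq M0 _ => i; rewrite big_nil.
by apply: M_eq (MD _ _ (MS a b _ (MG j j_lt)) (IH l_lt)) _ => i; rewrite big_cons.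
Qed.

End TwoSidedSpan.

Lemma nth_mem_filter (T : Type) (x0 : T) (P : pred T) (s : seq T) j :
  (j < size s)%N -> P (nth x0 s j) ->
  exists2 i, (i < size (filter P s))%N & nth x0 (filter P s) i = nth x0 s j.
Proof.
elim: s j => [//|a s IH] [|j] /= j_lt Pj; first by rewrite Pj; exists 0%N.
have [i i_lt nth_i] := IH j j_lt Pj.
by case: (P a); [exists i.+1 | exists i].
Qed.

Lemma nth_filter_mem (T : Type) (x0 : T) (P : pred T) (s : seq T) i :
  (i < size (filter P s))%N ->
  exists j, [/\ (j < size s)%N, nth x0 (filter P s) i = nth x0 s j & P (nth x0 s j)].
Proof.
elim: s i => [//|a s IH] i /=.
case Pa: (P a) => /=; last by move=> /IH [j [? ? ?]]; exists j.+1.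
by case: i => [|i] /= => [_|/IH [j [? ? ?]]]; [exists 0%N | exists j.+1].
Qed.

Section EnvOrders.
Variables (n : nat) (le : rel (mono n)).
Hypothesis le_adm : admissible le.
Local Notation lt := (strict le).

(* [exp_fold (a, b)] is the leading exponent of [m (x^a (x) x^(b^op))]. *)
Definition left_sided (o : env_kind) : bool :=
  match o with EStar | EUpC => true | ELowStar | ELowC => false end.

Definition exp_lift o (a : mono n) : mono n * mono n :=
  if left_sided o then (a, mzero n) else (mzero n, mrev a).

Definition on_lift_axis o (ab : mono n * mono n) : bool :=
  if left_sided o then ab.2 == mzero n else ab.1 == mzero n.

Definition exp_fold (ab : mono n * mono n) : mono n := madd ab.1 (mrev ab.2).

Lemma exp_fold_lift o a : exp_fold (exp_lift o a) = a.
Proof.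
by rewrite /exp_fold /exp_lift; case: left_sided; rewrite /= ?mrev0 ?madd0 ?add0m ?mrevK.
Qed.

Lemma exp_fold_madd2 u v : exp_fold (madd2 u v) = madd (exp_fold u) (exp_fold v).
Proof. by apply/ffunP => i; rewrite !ffunE; lia. Qed.

Lemma on_lift_axis_madd2 o u v a : madd2 u v = exp_lift o a -> on_lift_axis o u.
Proof.
rewrite /exp_lift /on_lift_axis /madd2.
by case: left_sided => -[e1 e2]; apply/eqP; [apply: madd_eq0 e2 | apply: madd_eq0 e1].
Qed.

Lemma env_ltxx o ab : env_lt le o ab ab = false.
Proof. by case: ab => a b; case: o; rewrite /env_lt /= !ltxx ?andbF. Qed.

Lemma env_lt_lift o a b : lt a b -> env_lt le o (exp_lift o a) (exp_lift o b).
Proof.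
by move=> ab; case: o; rewrite /env_lt /exp_lift /= ?mrev0 ?madd0 ?add0m ?mrevK ?ltxx ?eqxx ?ab.
Qed.

Lemma env_lt_fold o ab ab' : on_lift_axis o ab' ->
  env_lt le o ab ab' -> lt (exp_fold ab) (exp_fold ab').
Proof.
case: ab ab' => [a b] [a' b']; rewrite /on_lift_axis /exp_fold.
case: o => /= /eqP ->; rewrite /env_lt ?mrev0 ?(ltm0 le_adm) /=.
- by case/andP=> /eqP -> ab; rewrite mrev0 !madd0.
- by case/andP=> /eqP -> ab; rewrite !add0m.
- by rewrite andbF orbF.
- by rewrite andbF orbF.
Qed.

End EnvOrders.

Section Enveloping.
Variables (k : fieldType) (R E : algType k) (n : nat) (x : 'I_n -> R)
    (q : 'I_n -> 'I_n -> k) (p : 'I_n -> 'I_n -> R) (le : rel (mono n))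
    (lam rho : R -> E) (m : E -> R).
Hypotheses (hP : is_PBW x q p le) (henv : is_env x lam rho) (hm : is_mult_map lam rho m).

Local Notation bE := (env_basis x lam rho).
Local Notation lt := (strict le).
Let adm := pbw_adm hP.
Let hbR := pbw_basis hP.

Lemma env_basisP : is_basis bE. Proof. by case: henv => _ _ _ _ []. Qed.

Local Notation cR := (coef hbR).
Local Notation cE := (coef env_basisP).

Lemma lamD a b : lam (a + b) = lam a + lam b. Proof. by case: henv => [[]]. Qed.
Lemma lamZ (c : k) a : lam (c *: a) = c *: lam a. Proof. by case: henv => [[]]. Qed.
Lemma lamM a b : lam (a * b) = lam a * lam b. Proof. by case: henv => _ []. Qed.
Lemma lam1 : lam 1 = 1. Proof. by case: henv => _ []. Qed.
Lemma rhoD a b : rho (a + b) = rho a + rho b. Proof. by case: henv => _ _ []. Qed.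
Lemma rhoZ (c : k) a : rho (c *: a) = c *: rho a. Proof. by case: henv => _ _ []. Qed.
Lemma rhoM a b : rho (a * b) = rho b * rho a. Proof. by case: henv => _ _ _ []. Qed.
Lemma rho1 : rho 1 = 1. Proof. by case: henv => _ _ _ []. Qed.
Lemma lam_rhoC a b : lam a * rho b = rho b * lam a. Proof. by case: henv => _ _ _ _ []. Qed.
Lemma mD u v : m (u + v) = m u + m v. Proof. by case: hm. Qed.
Lemma mZ (c : k) u : m (c *: u) = c *: m u. Proof. by case: hm. Qed.
Lemma m_lam_rho a b : m (lam a * rho b) = a * b. Proof. by case: hm. Qed.

Lemma lam_sum (J : Type) (r : seq J) (F : J -> R) :
  lam (\sum_(j <- r) F j) = \sum_(j <- r) lam (F j).
Proof. by apply: (big_morph lam lamD); rewrite -(scale0r (0 : R)) lamZ scale0r. Qed.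

Lemma rho_sum (J : Type) (r : seq J) (F : J -> R) :
  rho (\sum_(j <- r) F j) = \sum_(j <- r) rho (F j).
Proof. by apply: (big_morph rho rhoD); rewrite -(scale0r (0 : R)) rhoZ scale0r. Qed.

Lemma m_sum (J : Type) (r : seq J) (F : J -> E) : m (\sum_(j <- r) F j) = \sum_(j <- r) m (F j).
Proof. by apply: (big_morph m mD); rewrite -(scale0r (0 : E)) mZ scale0r. Qed.

Lemma m_env_basis ab : m (bE ab) = smono x ab.1 * smono x (mrev ab.2).
Proof. exact: m_lam_rho. Qed.

Lemma m_lam_rhoM a b u : m (lam a * rho b * u) = a * m u * b.
Proof.
rewrite (coef_expand env_basisP u) mulr_sumr !m_sum mulr_sumr mulr_suml.
apply: eq_bigr => j _; rewrite -scalerAr !mZ -scalerAr -scalerAl /env_basis.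
by rewrite mulrA -(mulrA (lam a)) -lam_rhoC mulrA -lamM -mulrA -rhoM !m_lam_rho !mulrA.
Qed.

Lemma m_lam r : m (lam r) = r.
Proof. by rewrite -[lam r]mulr1 -rho1 m_lam_rho mulr1. Qed.

Lemma m_rho r : m (rho r) = r.
Proof. by rewrite -[rho r]mul1r -lam1 m_lam_rho mul1r. Qed.

Definition env_lift o (r : R) : E := if left_sided o then lam r else rho r.

Lemma m_env_lift o r : m (env_lift o r) = r.
Proof. by rewrite /env_lift; case: left_sided; rewrite ?m_lam ?m_rho. Qed.

Lemma env_lift_expand o r :
  env_lift o r = \sum_(a <- coef_supp hbR r) cR r a *: bE (exp_lift o a).
Proof.
have smono0 : smono x (mzero n) = 1 by rewrite /smono big1 // => i _; rewrite ffunE expr0.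
rewrite {1}(coef_expand hbR r) /env_lift /exp_lift /env_basis.
case: left_sided; rewrite ?lam_sum ?rho_sum; apply: eq_bigr => a _.
  by rewrite lamZ /= mrev0 smono0 rho1 mulr1.
by rewrite rhoZ /= mrevK smono0 lam1 mul1r.
Qed.

Lemma tspan_m_mul s (Gs : seq ('I_s -> R)) (c : E) (f : 'I_s -> E) :
  tspan Gs (fun i => m (f i)) -> tspan Gs (fun i => m (c * f i)).
Proof.
move=> span_f; apply: tspan_ext (tspan_sum (coef_supp env_basisP c)
    (fun ab => tspanM (cE c ab *: smono x ab.1) (smono x (mrev ab.2)) span_f)) _ => i.
rewrite [c in m (c * _)](coef_expand env_basisP c) mulr_suml m_sum; apply: eq_bigr => ab _.
by rewrite -!scalerAl mZ /env_basis m_lam_rhoM.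
Qed.

Lemma is_exp_lead (V : algType k) (I : eqType) (b : I -> V) (hb : is_basis b)
    s t (lt1 : rel I) (psi : I -> mono n) (w : I -> R) (u : 'I_s -> V) (v : 'I_s -> R) e i0 :
  (forall a, lead_exp hP (w a) (psi a)) -> (forall a, lt1 a e -> lt (psi a) (psi e)) ->
  (forall i, v i = \sum_(a <- coef_supp hb (u i)) coef hb (u i) a *: w a) ->
  is_exp b (modlt t lt1) u (e, i0) -> is_exp (smono x) (modlt t lt) v (psi e, i0).
Proof.
move=> w_lead psi_mono; apply: (is_exp_image (Q := fun g a => le g (psi a))).
- exact: ltxx.
- by move=> a g /(w_lead a).2.
- by move=> a g g_le /psi_mono; exact: (le_lt_trans adm g_le).
- by move=> g /le_eqVlt.
- exact: (w_lead e).1.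
Qed.

Lemma is_exp_smonoM s t (g : 'I_s -> R) e i0 d :
  is_exp (smono x) (modlt t lt) g (e, i0) ->
  is_exp (smono x) (modlt t lt) (fun i => smono x d * g i) (madd e d, i0).
Proof.
apply: (is_exp_lead (hb := hbR) (psi := fun a => madd a d) (w := fun a => smono x d * smono x a)).
- by move=> a; rewrite maddC; apply: lead_exp_smonoM.
- by move=> a; exact: (ltD2r adm d).
- move=> i; rewrite {1}(coef_expand hbR (g i)) mulr_sumr.
  by apply: eq_bigr => a _; rewrite scalerAr.
Qed.

Lemma is_exp_mult o s t (g : 'I_s -> E) ab i0 : on_lift_axis o ab ->
  is_exp bE (modlt t (env_lt le o)) g (ab, i0) ->
  is_exp (smono x) (modlt t lt) (fun i => m (g i)) (exp_fold ab, i0).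
Proof.
move=> ab_axis.
apply: (is_exp_lead (hb := env_basisP) (w := fun ab => smono x ab.1 * smono x (mrev ab.2))).
- by move=> ab'; apply: lead_exp_smonoM.
- by move=> ab'; apply: env_lt_fold.
- move=> i; rewrite {1}(coef_expand env_basisP (g i)) m_sum; apply: eq_bigr => ab' _.
  by rewrite mZ m_env_basis.
Qed.

Lemma is_exp_lift o s t (f : 'I_s -> R) a i0 :
  is_exp (smono x) (modlt t lt) f (a, i0) ->
  is_exp bE (modlt t (env_lt le o)) (fun i => env_lift o (f i)) (exp_lift o a, i0).
Proof.
apply: (is_exp_image (hb1 := hbR) (hb2 := env_basisP) (psi := exp_lift o)
  (w := fun a => bE (exp_lift o a)) (Q := fun g a => g = exp_lift o a)).
- by move=> ab; rewrite env_ltxx.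
- by move=> a' g; rewrite coef_basis; case: (g =P _) => //; rewrite eqxx.
- by move=> a' g -> /env_lt_lift.
- by move=> g ->; left.
- by rewrite coef_basis eqxx oner_neq0.
- by move=> i; rewrite env_lift_expand.
Qed.

Section GroebnerBasis.
Variables (s : nat) (M : ('I_s -> R) -> Prop) (o : env_kind) (t : modord_kind)
  (G : seq ('I_s -> E)).
Hypotheses (hM : subbimodule M)
  (hG : left_GB bE (@madd2 n) (modlt t (env_lt le o)) (fun F => M (fun i => m (F i))) G).

Local Notation zR := (@vzero k R s).
Local Notation zE := (@vzero k E s).
Local Notation mG j := (fun i => m (nth zE G j i)).
Local Notation G' := [seq g <- [seq (fun i => m (F i)) | F <- G] | [exists i, g i != 0]].

Lemma nth_mG'_mem idx : (idx < size G')%N ->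
  exists j, [/\ (j < size G)%N, nth zR G' idx = mG j & [exists i, m (nth zE G j i) != 0]].
Proof.
move=> /(nth_filter_mem zR) [j [+ ->]]; rewrite size_map => j_lt.
by rewrite (nth_map zE) //; exists j.
Qed.

Lemma mG_mem_G' j : (j < size G)%N -> [exists i, m (nth zE G j i) != 0] ->
  exists2 idx, (idx < size G')%N & nth zR G' idx = mG j.
Proof.
move=> j_lt mG_nz.
have j_lt' : (j < size [seq (fun i => m (F i)) | F <- G])%N by rewrite size_map.
have := nth_mem_filter (x0 := zR) (P := [pred g : 'I_s -> R | [exists i, g i != 0]]) j_lt'.
by rewrite /= (nth_map zE) //; case/(_ mG_nz) => idx idx_lt nth_idx; exists idx.
Qed.

Lemma M_mG j : (j < size G)%N -> M (mG j).
Proof. by case: hG => /(_ j) GM _ _ /GM []. Qed.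

Lemma G'_in_minus0 : in_minus0 M G'.
Proof.
move=> idx /nth_mG'_mem [j [j_lt -> /existsP nz]]; split; first exact: M_mG.
by case: nz => i; exists i.
Qed.

Lemma tspan_mG j : (j < size G)%N -> tspan G' (mG j).
Proof.
move=> j_lt; case: (boolP [exists i, m (nth zE G j i) != 0]) => [nz|/existsPn z].
  by have [idx idx_lt <-] := mG_mem_G' j_lt nz; apply: tspan_nth.
by apply: tspan_ext (tspan0 G') _ => i; move/negPn/eqP: (z i).
Qed.

(* [F = m (lam F)] and [lam F] lies in the left span of [G]. *)
Lemma M_tspan F : M F <-> tspan G' F.
Proof.
split=> [MF|]; last by apply: subbimodule_tspan hM _ => idx /G'_in_minus0 [].
have [_ /(_ (fun i => lam (F i))) [+ _] _] := hG.
rewrite (functional_extensionality _ F (fun i => m_lam (F i))).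
move=> /(_ MF) [c lamF].
apply: tspan_ext (tspan_sum (index_enum 'I_(size G))
  (fun j => tspan_m_mul (c j) (tspan_mG (ltn_ord j)))) _ => i.
by rewrite -[F i in RHS]m_lam lamF m_sum.
Qed.

Lemma ExpSet_sub_cone e :
  ExpSet (smono x) (modlt t lt) M e -> ConeUnion (smono x) (@madd n) (modlt t lt) G' e.
Proof.
case: e => a i0 [f [Mf _ f_exp]].
have lift_exp := is_exp_lift o f_exp.
have lift_M : M (fun i => m (env_lift o (f i))).
  by rewrite (functional_extensionality _ f (fun i => m_env_lift o (f i))).
have lift_nz : vnonzero (fun i => env_lift o (f i)).
  by exists i0; exact: (is_exp_nonzero env_basisP lift_exp).
have [_ _ /(_ (exp_lift o a, i0)) [+ _]] := hG.
case/(_ (ex_intro _ _ (And3 lift_M lift_nz lift_exp))).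
move=> j [j_lt [[ab i] [d [g_exp [a_eq ->]]]]].
have mg_exp := is_exp_mult (on_lift_axis_madd2 (esym a_eq)) g_exp.
have mg_nz : [exists i, m (nth zE G j i) != 0].
  by apply/existsP; exists i; exact: (is_exp_nonzero hbR mg_exp).
have [idx idx_lt mG_idx] := mG_mem_G' j_lt mg_nz.
exists idx; split => //; exists (exp_fold ab, i), (exp_fold d); split; first by rewrite mG_idx.
by rewrite -(exp_fold_lift o a) a_eq exp_fold_madd2.
Qed.

Lemma cone_sub_ExpSet e :
  ConeUnion (smono x) (@madd n) (modlt t lt) G' e -> ExpSet (smono x) (modlt t lt) M e.
Proof.
move=> [idx [idx_lt [[a i0] [d [g_exp ->]]]]].
have [j [j_lt mG_idx _]] := nth_mG'_mem idx_lt; rewrite mG_idx in g_exp.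
have dg_exp := is_exp_smonoM d g_exp.
exists (fun i => smono x d * m (nth zE G j i)); split=> //; last first.
  by exists i0; exact: (is_exp_nonzero hbR dg_exp).
have [_ _ MM] := hM; have := MM (smono x d) 1 _ (M_mG j_lt).
by rewrite (functional_extensionality _ _ (fun i => mulr1 (smono x d * m (nth zE G j i)))).
Qed.

End GroebnerBasis.

End Enveloping.

Theorem mainTheorem6 (k : fieldType) (R E : algType k) (n : nat) (x : 'I_n -> R)
    (q : 'I_n -> 'I_n -> k) (p : 'I_n -> 'I_n -> R) (le : rel (mono n))
    (lam rho : R -> E) (m : E -> R)
    (s : nat) (M : ('I_s -> R) -> Prop) (o : env_kind) (t : modord_kind)
    (G : seq ('I_s -> E)) :
  is_PBW x q p le ->
  is_env x lam rho ->
  is_mult_map lam rho m ->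
  subbimodule M ->
  left_GB (env_basis x lam rho) (@madd2 n) (modlt t (env_lt le o))
    (fun F : 'I_s -> E => M (fun i => m (F i))) G ->
  twosided_GB (smono x) (@madd n) (modlt t (strict le)) M
    [seq g <- [seq (fun i => m (F i)) | F <- G] | [exists i, g i != 0]].
Proof.
move=> hP henv hm hM hG; split.
- exact: (G'_in_minus0 hG).
- exact: (M_tspan henv hm hM hG).
- move=> e; split; first exact: (ExpSet_sub_cone hP henv hm hG).
  exact: (cone_sub_ExpSet hP hM hG).
Qed.
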